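(* Let $K$ be a perfect field, let $K\subseteq L\subseteq M$ be finite extensions inside $\bar K$, and let $J/K$ be a finite extension with $\tilde M\cap\tilde J=K$. Then $[LJ:K]=[L:K][J:K]$, $t_K(LJ)=t_K(L)\,t_K(J)$, $\rho_K(MJ,LJ)=r_K(J)\,\rho_K(M,L)$, and $\tau_K(MJ,LJ)=[J:K]\,\tau_K(M,L)$.
   Context: $\bar K$ is a fixed algebraic closure; $\tilde E$ is the Galois closure in $\bar K$ of $E/K$. For $E/K$ with $G=\mathrm{Gal}(\tilde E/K)$, $H=\mathrm{Gal}(\tilde E/E)$: the cluster size is $r_K(E)=[N_G(H):H]$ and the ascending index is $t_K(E)=[G:H^G]$ with $H^G$ the normal closure of $H$ in $G$. For finite $L/K$, $M/K$: writing $L=K(\alpha)$ with minimal polynomial $f$, $\rho_K(M,L)$ is the number of roots of $f$ in $M$; if $L_1,\dots,L_a$ are all the distinct subfields of $M$ isomorphic to $L$ over $K$, then $\tau_K(M,L)=[L_1\cap\cdots\cap L_a:K]$ if $a\ge1$ and $0$ if $a=0$. *)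

From HB Require Import structures.
From mathcomp Require Import all_boot all_order all_algebra all_fingroup all_solvable all_field.
From Stdlib Require Import ClassicalEpsilon.
Set Implicit Arguments. Unset Strict Implicit. Unset Printing Implicit Defensive.
Import GRing.Theory.
Local Open Scope ring_scope.

Definition perfect_field (F : fieldType) : Prop :=
  [pchar F] =i pred0 \/
  (forall p, p \in [pchar F] -> forall x : F, exists y : F, y ^+ p = x).

Section Defs.
Variables (F : fieldType) (Om : splittingFieldType F).
(* K is the base field F, i.e. the subfield 1 of Om; Om is a finite normal
   extension of K playing the role of (a large enough part of) \bar K. *)

Definition galClosure (E : {vspace Om}) : {aspace Om} :=
  agenv_aspace (\sum_(s in ('Gal({:Om} / 1%VS))%g) (s @: E))%VS.

(* cluster size r_K(E) = [N_G(H) : H] *)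
Definition clusterSize (E : {vspace Om}) : nat :=
  (#|'N_('Gal(galClosure E / 1%VS))('Gal(galClosure E / E)) : 'Gal(galClosure E / E)|)%g.

(* ascending index t_K(E) = [G : H^G], H^G the normal closure of H in G *)
Definition ascIndex (E : {vspace Om}) : nat :=
  (#|'Gal(galClosure E / 1%VS) :
     << class_support 'Gal(galClosure E / E) 'Gal(galClosure E / 1%VS) >>|)%g.

Definition primElt (L : {vspace Om}) : Om :=
  epsilon (inhabits 0) (fun a : Om => <<1%VS; a>>%VS = L).

Definition nrootsIn (M : {vspace Om}) (p : {poly Om}) : nat :=
  epsilon (inhabits 0%N) (fun n => exists rs : seq Om,
    [/\ uniq rs, size rs = n & forall x, (x \in rs) = (x \in M) && root p x]).

Definition rhoK (M L : {vspace Om}) : nat :=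
  nrootsIn M (minPoly 1%VS (primElt L)).

Definition isoK (L L' : {vspace Om}) : Prop :=
  exists f : 'End(Om), kHom 1%VS L f /\ (f @: L)%VS = L'.

Definition conjIn (M L L' : {vspace Om}) : Prop :=
  is_aspace L' /\ (L' <= M)%VS /\ isoK L L'.

Definition tauK (M L : {vspace Om}) : nat :=
  epsilon (inhabits 0%N) (fun n =>
    ((forall L', ~ conjIn M L L') /\ n = 0%N) \/
    ((exists L', conjIn M L L') /\
     exists D : {vspace Om},
       (forall x, x \in D <-> (forall L', conjIn M L L' -> x \in L')) /\
       n = \dim D)).
End Defs.

(* Everything is read off in G = 'Gal(Om / K), with H_E = 'Gal(Om / E); K perfect
   makes Om / K separable, so E |-> H_E is the Galois correspondence and every
   subfield has a primitive element.  Then [E : K] = [G : H_E]; as restriction to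
   the Galois closure of E has its kernel inside H_E, t_K(E) = [G : H_E^G] and
   r_K(E) = [N_G(H_E) : H_E]; rho_K(M, L) |H_L| = #{g | g L <= M}; and
   tau_K(M, L) = [G : <H_L^g | g L <= M>] (or 0).  Moreover H_(LJ) = H_L :&: H_J.
   The fixers A, B of the Galois closures of M and J are normal in G, with
   A <= H_M <= H_L and B <= H_J, and A B = G because the closures meet in K.
   In such a factorization any X >= A and Y >= B satisfy X Y = G, whence
   [G : X :&: Y] = [G : X][G : Y]; the modular law shows that normal closures
   commute with these intersections and that g conjugates H_L :&: H_J over
   H_M :&: H_J exactly when it conjugates H_L over H_M and normalises H_J;
   and an A-stable subset S of G meets every N >= B in |S| |N| / |G| points. *)

From HB Require Import structures.
From mathcomp Require Import all_boot all_order all_algebra all_fingroup all_solvable all_field.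
From mathcomp Require Import ring zify.
From Stdlib Require Import ClassicalEpsilon.
Set Implicit Arguments. Unset Strict Implicit. Unset Printing Implicit Defensive.

Section FiniteGroups.
Local Open Scope group_scope.
Variable gT : finGroupType.
Implicit Types (S T W Z : {set gT}) (G A B N X Y : {group gT}).

Lemma indexgI_mulG G X Y :
  X * Y = G -> #|G : X :&: Y| = (#|G : X| * #|G : Y|)%N.
Proof.
move=> defG; have sXG : X \subset G by rewrite -defG mulG_subl.
have sYG : Y \subset G by rewrite -defG mulG_subr.
apply/eqP; rewrite -(eqn_pmul2l (cardG_gt0 (X :&: Y))) Lagrange ?subIset ?sXG //.
rewrite -(eqn_pmul2l (cardG_gt0 X)) -(eqn_pmul2l (cardG_gt0 Y)) -{1}(Lagrange sXG).
rewrite mulnA (mulnC #|Y|) mul_cardG defG -(Lagrange sYG).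
by apply/eqP; ring.
Qed.

Lemma mulg_supG G A B X Y : A * B = G ->
  A \subset X -> B \subset Y -> X \subset G -> Y \subset G -> X * Y = G.
Proof.
move=> defG sAX sBY sXG sYG; apply/eqP.
by rewrite eqEsubset mul_subG //= -{1}defG mulgSS.
Qed.

Lemma rcosets_partition_mulS A T : partition (rcosets A T) (A * T).
Proof.
have sTAT : {subset T <= A * T} by apply/subsetP/mulG_subr.
have defAx x : x \in A * T -> [set y in A * T | rcoset A x == rcoset A y] = A :* x.
  move=> ATx; apply/setP=> y; rewrite inE !rcosetE (sameP eqP rcoset_eqP).
  by rewrite rcoset_sym; apply/andb_idl/subsetP; rewrite mulGS sub1set.
have:= preim_partitionP (rcoset A) (A * T); congr (partition _ _); apply/setP=> Ax.
apply/imsetP/idP=> [[x ATx ->] | ]; first by rewrite defAx // mem_rcosets.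
by case/rcosetsP=> x /sTAT-ATx ->; exists x; rewrite ?defAx.
Qed.

Lemma card_lmul_stable A T : A * T = T -> #|T| = (#|rcosets A T| * #|A|)%N.
Proof.
move=> defT; apply: card_uniform_partition; last by rewrite -{2}defT rcosets_partition_mulS.
by move=> _ /rcosetsP[g _ ->]; apply: card_rcoset.
Qed.

Lemma card_setI_lmul_stable A N T :
  A * T = T -> T \subset A * N -> (#|T :&: N| * #|A|)%N = (#|T| * #|A :&: N|)%N.
Proof.
move=> defT sTAN.
have pT : partition (rcosets A T) T by rewrite -{2}defT rcosets_partition_mulS.
suff -> : #|T :&: N| = (#|rcosets A T| * #|A :&: N|)%N.
  by rewrite (card_lmul_stable defT) mulnAC.
rewrite -sum1_card (eq_bigl (fun x => (x \in T) && (x \in N))) => [|x]; last by rewrite inE.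
rewrite big_mkcondr -[in LHS](cover_partition pT) big_trivIset; last by case/and3P: pT.
rewrite -sum_nat_const; apply: eq_bigr => _ /rcosetsP[g Tg ->].
have /mulsgP[a b Aa Nb ->] := subsetP sTAN g Tg.
(* [A :* (a * b) = A :* b] meets [N] in [(A :&: N) :* b]. *)
rewrite rcosetM (rcoset_id Aa) -big_mkcondr sum1_card -(card_rcoset _ b).
by apply: eq_card => x; rewrite unfold_in !mem_rcoset inE (groupMr _ (groupVr Nb)).
Qed.

Lemma card_setI_mulG A N T :
  A * T = T -> T \subset A * N -> (#|T :&: N| * #|(A * N)%g|)%N = (#|T| * #|N|)%N.
Proof.
move=> defT sTAN; have cardTN := card_setI_lmul_stable defT sTAN.
apply/eqP; rewrite -(eqn_pmul2r (cardG_gt0 (A :&: N)%G)) -mulnA -mul_cardG.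
by rewrite mulnA cardTN mulnAC.
Qed.

Definition nclosure Z S := <<class_support Z S>>.

Lemma nclosure_normal G Z : Z \subset G -> nclosure Z G <| G.
Proof.
by move=> sZG; rewrite /normal gen_subG class_support_subG // norms_gen ?class_support_norm.
Qed.

Lemma sub_nclosure G Z : Z \subset nclosure Z G.
Proof. exact: subset_trans (sub_class_support _ _) (subset_gen _). Qed.

Lemma nclosure_sub G Z N : N <| G -> Z \subset N -> nclosure Z G \subset N.
Proof. by case/andP=> _ nNG sZN; rewrite gen_subG class_support_sub_norm. Qed.

Lemma nclosureS G Z1 Z2 : Z2 \subset G -> Z1 \subset Z2 -> nclosure Z1 G \subset nclosure Z2 G.
Proof.
move=> sZ2G sZ12; apply: nclosure_sub (nclosure_normal sZ2G) _.
exact: subset_trans sZ12 (sub_nclosure _ _).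
Qed.

Lemma nclosure_sub_mull G A Z W : A <| G -> W \subset G ->
  Z \subset A * nclosure W G -> nclosure Z G \subset A * nclosure W G.
Proof.
move=> nsAG sWG; have nsWG := nclosure_normal sWG.
rewrite -norm_joinEr; last exact: subset_trans (normal_sub nsWG) (normal_norm nsAG).
by apply: nclosure_sub; apply: normalY.
Qed.

Lemma mulg_setI_modl A B X : A \subset X -> X \subset A * B -> A * (X :&: B) = X.
Proof. by move=> sAX sXAB; rewrite setIC group_modl // (setIidPr sXAB). Qed.

Lemma mulg_setI_modr A B Y : B \subset Y -> Y \subset A * B -> (Y :&: A) * B = Y.
Proof. by move=> sBY sYAB; rewrite group_modr // (setIidPl sYAB). Qed.

Definition conjs_gen (X S : {set gT}) := <<\bigcup_(g in S) X :^ g>>.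

Lemma normal_sub_conjs_gen G A X S g :
  A <| G -> A \subset X -> g \in S -> S \subset G -> A \subset conjs_gen X S.
Proof.
move=> nsAG sAX Sg sSG; apply: subset_trans (sub_gen (bigcup_sup g Sg)).
by rewrite -(normP (subsetP (normal_norm nsAG) g (subsetP sSG g Sg))) conjSg.
Qed.

(* The inverse of the usual transporter ([Z \subset X :^ g] instead of
   [Z :^ g \subset X]), matching [g @: L <= M] on the field side. *)
Definition transporter (G Z X : {set gT}) := [set g in G | Z \subset X :^ g].

Lemma mulg_transporter G Z X :
  X \subset G -> X * transporter G Z X = transporter G Z X.
Proof.
move=> sXG; apply/eqP; rewrite eqEsubset mulg_subr ?group1 // andbT.
apply/subsetP=> _ /mulsgP[h g Xh /setIdP[Gg sZXg] ->].
have Gh := subsetP sXG h Xh.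
by rewrite /transporter inE groupM // conjsgM conjGid.
Qed.

Section NormalFactorization.

Variables G A B : {group gT}.
Hypotheses (nsAG : A <| G) (nsBG : B <| G) (defG : A * B = G).

Let sBG : B \subset G. Proof. exact: normal_sub nsBG. Qed.
Let nAG : G \subset 'N(A). Proof. exact: normal_norm nsAG. Qed.
Let nBG : G \subset 'N(B). Proof. exact: normal_norm nsBG. Qed.

Lemma nclosureI X Y : A \subset X -> X \subset G -> B \subset Y -> Y \subset G ->
  nclosure (X :&: Y) G = nclosure X G :&: nclosure Y G.
Proof.
move=> sAX sXG sBY sYG; have sXYG : X :&: Y \subset G by rewrite subIset ?sXG.
apply/eqP; rewrite eqEsubset subsetI !nclosureS ?subsetIl ?subsetIr //=.
set P := nclosure (X :&: Y) G.
set P1 := nclosure (X :&: B) G; set P2 := nclosure (Y :&: A) G.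
have sXBG : X :&: B \subset G by rewrite subIset ?sXG.
have sYAG : Y :&: A \subset G by rewrite subIset ?sYG.
have sP1B : P1 \subset B by apply: nclosure_sub; rewrite ?subsetIr.
have sP2A : P2 \subset A by apply: nclosure_sub; rewrite ?subsetIr.
have sP1P : P1 \subset P by apply: nclosureS; rewrite ?setIS.
have sP2P : P2 \subset P by apply: nclosureS; rewrite // setIC setSI.
have sXAP1 : nclosure X G \subset A * P1.
  apply: nclosure_sub_mull => //.
  by rewrite -{1}(mulg_setI_modl sAX (_ : X \subset A * B)) ?mulgS ?sub_nclosure ?defG.
have cP2B : commute P2 B.
  exact: normC (subset_trans (normal_sub (nclosure_normal sYAG)) nBG).
have sYP2B : nclosure Y G \subset P2 * B.
  rewrite cP2B; apply: nclosure_sub_mull => //; rewrite -cP2B.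
  by rewrite -{1}(mulg_setI_modr sBY (_ : Y \subset A * B)) ?mulSg ?sub_nclosure ?defG.
(* [a * y = z * b] forces [z^-1 * a = b * y^-1 \in A :&: B <= X :&: Y]. *)
apply/subsetP=> g /setIP[/(subsetP sXAP1)/mulsgP[a y Aa P1y ->]].
case/(subsetP sYP2B)/mulsgP=> z b P2z Bb eg.
have Az : z \in A := subsetP sP2A z P2z.
have By : y \in B := subsetP sP1B y P1y.
have ABza : z^-1 * a \in A :&: B.
  have eza : z^-1 * a = b * y^-1 by rewrite -[a](mulgK y) eg -mulgA mulKg.
  by rewrite inE {2}eza !groupM ?groupV.
have Pza : z^-1 * a \in P.
  apply: (subsetP (sub_nclosure _ _)); move: ABza; rewrite !inE.
  by case/andP=> /(subsetP sAX) -> /(subsetP sBY) ->.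
rewrite -(mulKVg z a) -mulgA.
have [Pz Py] := (subsetP sP2P z P2z, subsetP sP1P y P1y).
by rewrite groupM // groupM.
Qed.

Lemma conjs_genI X Y S :
    A \subset X -> X \subset G -> B \subset Y -> Y \subset G ->
    S \subset G -> X * S = S ->
  conjs_gen (X :&: Y) (S :&: 'N_G(Y)) = conjs_gen X S :&: Y.
Proof.
move=> sAX sXG sBY sYG sSG defS.
set Q' := conjs_gen _ _; set Q := conjs_gen X S.
have nYB : B \subset 'N_G(Y) by rewrite subsetI sBG (subset_trans sBY) ?normG.
have SB_SN : S :&: B \subset S :&: 'N_G(Y) by rewrite setIS.
have sXYbQ' b : b \in S :&: B -> (X :&: Y) :^ b \subset Q'.
  by move=> SBb; rewrite sub_gen // (bigcup_max b) ?(subsetP SB_SN).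
have conjS_B g : g \in S -> exists2 b, b \in S :&: B & X :^ g = X :^ b.
  move=> Sg; have /mulsgP[a b Aa Bb Dg] : g \in A * B by rewrite defG (subsetP sSG).
  have Xa := subsetP sAX a Aa; exists b; last by rewrite Dg conjsgM conjGid.
  by rewrite inE Bb andbT -defS -[b](mulKg a) -Dg mem_mulg ?groupV.
have sQ'Y : Q' \subset Y.
  rewrite gen_subG; apply/bigcupsP=> g /setIP[_ /setIP[_ /normP nYg]].
  by rewrite conjIg nYg subsetIr.
apply/eqP; rewrite eqEsubset subsetI sQ'Y andbT; apply/andP; split.
  rewrite genS //; apply/bigcupsP=> g /setIP[Sg _].
  by rewrite (bigcup_max g) // conjIg subsetIl.
have [S0 | [g0 Sg0]] := set_0Vmem S.
  by rewrite /Q /conjs_gen S0 big_set0 gen0 subIset ?sub1G.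
have [b0 SBb0 _] := conjS_B g0 Sg0.
have sYAQ' : Y :&: A \subset Q'.
  apply: subset_trans (sXYbQ' b0 SBb0); have /setIP[_ Bb0] := SBb0.
  have nAb0 := subsetP nAG b0 (subsetP sBG b0 Bb0).
  rewrite -{1}(conjGid (subsetP sBY b0 Bb0)) -{1}(normP nAb0) -conjIg conjSg.
  by rewrite setIC setSI.
have nQ'A : Q' \subset 'N(A) by rewrite (subset_trans sQ'Y) ?(subset_trans sYG).
have sQAQ' : Q \subset A * Q'.
  rewrite -norm_joinEr // gen_subG; apply/bigcupsP=> g Sg.
  have [b SBb ->] := conjS_B g Sg; have /setIP[_ Bb] := SBb.
  have [Gb Yb] := (subsetP sBG b Bb, subsetP sBY b Bb).
  rewrite /= norm_joinEr //.
  rewrite -(mulg_setI_modl (_ : A \subset X :^ b) (_ : X :^ b \subset A * B)).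
  - rewrite mulgS // (subset_trans _ (sXYbQ' b SBb)) //.
    by rewrite conjIg (conjGid Yb) setIS.
  - by rewrite -(normP (subsetP nAG b Gb)) conjSg.
  by rewrite defG -(conjGid Gb) conjSg.
by rewrite setIC (subset_trans (setIS Y sQAQ')) // -group_modr // mul_subG.
Qed.

Lemma transporterI (Z : {group gT}) X Y :
    A \subset Z -> Z \subset G -> A \subset X -> B \subset Y -> Y \subset G ->
  transporter G (Z :&: Y) (X :&: Y) = transporter G Z X :&: 'N_G(Y).
Proof.
move=> sAZ sZG sAX sBY sYG; apply/setP=> g; rewrite !inE.
case Gg : (g \in G) => //=; rewrite conjIg subsetI.
have [nAg nBg] := (subsetP nAG g Gg, subsetP nBG g Gg).
apply/andP/andP=> [[sZYXg sZYYg] | [sZXg nYg]]; last first.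
  have -> : Y :^ g = Y by apply/eqP; rewrite eqEcard nYg cardJg leqnn.
  by split; [rewrite subIset ?sZXg | rewrite subsetIr].
split.
  rewrite -(mulg_setI_modl sAZ (_ : Z \subset A * B)) ?defG //.
  apply: (mul_subG (G := (X :^ g)%G)).
    by rewrite -(normP nAg) conjSg.
  by apply: subset_trans sZYXg; rewrite setIS.
have sYYg : Y \subset Y :^ g.
  rewrite -{1}(mulg_setI_modr sBY (_ : Y \subset A * B)) ?defG //.
  apply: (mul_subG (G := (Y :^ g)%G)).
    by apply: subset_trans sZYYg; rewrite setIC setSI.
  by rewrite -(normP nBg) conjSg.
suff eYg : Y :^ g = Y by rewrite eYg.
by apply/esym/eqP; rewrite eqEcard sYYg cardJg leqnn.
Qed.

End NormalFactorization.

End FiniteGroups.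

Lemma morphim_class_support (aT rT : finGroupType) (D : {group aT})
    (f : {morphism D >-> rT}) (A B : {set aT}) :
  A \subset D -> B \subset D ->
  (f @* class_support A B = class_support (f @* A) (f @* B))%g.
Proof.
move=> sAD sBD; rewrite !morphimEsub //; last first.
  by rewrite class_support_sub_norm // (subset_trans sBD) ?normG.
apply/setP=> y; apply/imsetP/imset2P=> [[_ /imset2P[a b Aa Bb ->] ->] |].
  have [Da Db] := (subsetP sAD a Aa, subsetP sBD b Bb).
  by exists (f a) (f b); rewrite ?imset_f ?morphJ.
case=> _ _ /imsetP[a Aa ->] /imsetP[b Bb ->] ->.
have [Da Db] := (subsetP sAD a Aa, subsetP sBD b Bb).
by exists (a ^ b)%g; rewrite ?imset2_f ?morphJ.
Qed.

Lemma index_morphim_ker_sub (aT rT : finGroupType) (D G H : {group aT})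
    (f : {morphism D >-> rT}) :
  ('ker f \subset H -> H \subset G -> G \subset D ->
  #|f @* G : f @* H| = #|G : H|)%g.
Proof.
move=> sKH sHG sGD; rewrite -(index_morphim_ker f sHG sGD).
suff /eqP -> : #|'ker_G f : H|%g == 1%N by rewrite muln1.
by rewrite indexg_eq1 subIset // sKH orbT.
Qed.

Import GRing.Theory.
Local Open Scope ring_scope.

Section PerfectSeparable.
Variables (F : fieldType) (Om : splittingFieldType F).

Lemma polyOver1_comp_Xn_expr p (g : {poly Om}) :
    p \in [pchar Om] -> (forall c : F, exists e : F, e ^+ p = c) ->
    g \is a polyOver 1%VS ->
  exists2 h, h \is a polyOver 1%VS & g \Po 'X^p = h ^+ p.
Proof.
move=> pchOm rootF g1.
have rootg (i : 'I_(size g)) : exists d : Om, d \in 1%VS /\ d ^+ p = g`_i.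
  have /vlineP[c ->] := polyOverP g1 i; have [e <-] := rootF c.
  by exists e%:A; rewrite rpredZ ?memv_line // -!in_algE rmorphXn.
have [d dP] := fin_all_exists rootg.
exists (\sum_(i < size g) (d i)%:P * 'X^i).
  apply: rpred_sum => i _; rewrite rpredM ?rpredX ?polyOverX //.
  by rewrite polyOverC; case: (dP i).
have pchP : p \in [pchar {poly Om}] := rmorph_pchar polyC pchOm.
apply/esym; rewrite -(pFrobenius_autE pchP) rmorph_sum comp_polyE.
apply: eq_bigr => i _ /=; rewrite rmorphM /= !pFrobenius_autE -polyC_exp.
by case: (dP i) => _ ->; rewrite -exprM mulnC exprM mul_polyC.
Qed.

Lemma perfect_field_separable : perfect_field F -> separable 1 {:Om}.
Proof.
move=> perfF; apply/separableP=> x _; apply/negP=> /negP/separablePn_pchar.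
case=> p pchOm [g g1 Dm]; have pchF : p \in [pchar F] by rewrite -(pchar_lalg Om).
have [/(_ p) | rootF] := perfF; first by rewrite pchF.
have [h h1 hp] := polyOver1_comp_Xn_expr pchOm (rootF p pchF) g1.
have p_gt1 : (1 < p)%N := prime_gt1 (pcharf_prime pchOm).
have mxh : minPoly 1 x = h ^+ p by rewrite Dm hp.
have hx : root h x.
  by have := root_minPoly 1 x; rewrite mxh /root horner_exp expf_eq0 => /andP[].
have hn0 : h != 0.
  apply/eqP=> h0; have := monic_neq0 (monic_minPoly 1 x).
  by rewrite mxh h0 expr0n (gtn_eqF (ltnW p_gt1)) eqxx.
(* [minPoly 1 x = h ^+ p] divides [h] although it is larger. *)
have := dvdp_leq hn0 (minPoly_dvdp h1 hx); have := size_exp h p; rewrite mxh.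
have : ((size h).-1 * 2 <= (size h).-1 * p)%N by rewrite leq_mul2l p_gt1 orbT.
by move: (size (h ^+ p)) (size h) (root_size_gt1 hn0 hx) => m s; lia.
Qed.

End PerfectSeparable.

Section GaloisCorrespondence.
Variables (F : fieldType) (Om : splittingFieldType F).
Hypothesis sepOm : separable 1 {:Om}.
Local Notation gT := (gal_of {:Om}).
Local Notation galOver E := ('Gal({:Om} / E))%g.
Local Notation galK := ('Gal({:Om} / 1))%g.
Implicit Types E K L M : {subfield Om}.

Lemma galois_full K : galois K {:Om}.
Proof. by rewrite /galois subvf (separableSl (sub1v K) sepOm) normalFieldf. Qed.

Lemma mem_galK (x : gT) : x \in galK.
Proof. by rewrite gal_kHom ?subvf ?k1AHom. Qed.

Lemma sub_galK (A : {set gT}) : (A \subset galK)%g.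
Proof. by apply/subsetP=> x _; apply: mem_galK. Qed.

Lemma fixedField_galOver E : fixedField (galOver E) = E.
Proof. exact: galois_fixedField (galois_full E). Qed.

Lemma subv_galOver E K : (E <= K)%VS = (galOver K \subset galOver E)%g.
Proof.
apply/idP/idP=> [|/fixedFieldS]; first exact: galS.
by rewrite !fixedField_galOver.
Qed.

Lemma dim_galOver E : \dim E = #|galK : galOver E|%g.
Proof.
have := dim_fixed_galois (galois_full 1%AS) (galS {:Om}%AS (sub1v E)).
by rewrite fixedField_galOver dimv1 divn1.
Qed.

Lemma galOverM E K : galOver (E * K)%AS = (galOver E :&: galOver K)%g.
Proof.
apply/eqP; rewrite eqEsubset subsetI !galS ?field_subvMr ?field_subvMl //=.
set H := (galOver E :&: galOver K)%G.
have <- : galOver (fixedField H) = H by apply: gal_fixedField.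
rewrite galS // prodv_sub // -[X in (X <= _)%VS]fixedField_galOver.
  by rewrite fixedFieldS ?subsetIl.
by rewrite fixedFieldS ?subsetIr.
Qed.

Lemma galOver_galClosure E : galOver (galClosure E) = gcore (galOver E) galK.
Proof.
apply/eqP; rewrite eqEsubset; apply/andP; split.
  apply/bigcapsP=> s _; rewrite gal_conjg galS // /galClosure /=.
  by rewrite (subv_trans _ (sub_agenv _)) // (sumv_sup s) ?mem_galK.
set H := gcore (galOver E) galK.
have <- : galOver (fixedField H) = H by apply: gal_fixedField.
rewrite galS // /galClosure agenv_sub_modl ?prodv_sub //.
  by rewrite -[X in (X <= _)%VS](fixedField_galOver 1%AS) fixedFieldS ?sub_galK.
apply/subv_sumP=> s _; rewrite -[X in (X <= _)%VS](fixedField_galOver (s @: E)%AS).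
by rewrite fixedFieldS // -gal_conjg (bigcap_inf s) ?mem_galK.
Qed.

Lemma galOver_galClosure_normal E : (galOver (galClosure E) <| galK)%g.
Proof. by rewrite galOver_galClosure gcore_normal ?sub_galK. Qed.

Lemma sub_galClosure E : (E <= galClosure E)%VS.
Proof. by rewrite subv_galOver galOver_galClosure gcore_sub. Qed.

Lemma galClosure_galois E : galois 1 (galClosure E).
Proof.
rewrite -(fixedField_galOver (galClosure E)).
exact: (normal_fixedField_galois (galois_full 1%AS) (galOver_galClosure_normal E)).
Qed.

Section RestrictionToClosure.
Variable E : {subfield Om}.
Local Notation Et := (galClosure E).

Let sKEt : (1 <= Et <= {:Om})%VS. Proof. by rewrite sub1v subvf. Qed.
Let nKEt : normalField 1 Et. Proof. by case/and3P: (galClosure_galois E). Qed.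
Let res := normalField_cast_morphism sKEt nKEt.

Let res_galK : (res @* galK)%g = 'Gal(Et / 1)%g.
Proof. exact: (normalField_img (galois_full 1%AS)). Qed.

Let res_galOver : (res @* galOver E)%g = 'Gal(Et / E)%g.
Proof.
have sEEt : (E <= Et <= {:Om})%VS by rewrite sub_galClosure subvf.
have nEEt : normalField E Et by apply: normalFieldS nKEt; apply: sub1v.
rewrite -(normalField_img (galois_full E) sEEt nEEt) !morphimEsub ?sub_galK //.
Qed.

Let ker_res_sub : ('ker res \subset galOver E)%g.
Proof. by rewrite normalField_ker -subv_galOver sub_galClosure. Qed.

Lemma ascIndex_galK : ascIndex E = #|galK : nclosure (galOver E) galK|%g.
Proof.
have sCK : (class_support (galOver E) galK \subset galK)%g by apply: sub_galK.
rewrite /ascIndex -res_galK -res_galOver -morphim_class_support ?sub_galK //.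
rewrite -morphim_gen // index_morphim_ker_sub ?gen_subG //.
exact: subset_trans ker_res_sub (sub_nclosure _ _).
Qed.

Lemma clusterSize_galK : clusterSize E = #|'N_galK(galOver E) : galOver E|%g.
Proof.
rewrite /clusterSize -res_galK -res_galOver -morphim_subnormG ?sub_galK //.
by rewrite index_morphim_ker_sub ?subsetIl // subsetI sub_galK normG.
Qed.

End RestrictionToClosure.

Lemma galMf (x y : gT) (a : Om) : (x * y)%g a = y (x a).
Proof. exact: galM (memvf a). Qed.

Definition gal_into (M L : {vspace Om}) := [set g : gT | (g @: L <= M)%VS].

Lemma gal_into_transporter M L :
  gal_into M L = transporter galK (galOver M) (galOver L).
Proof.
by apply/setP=> g; rewrite !inE mem_galK (gal_conjg L g) -(subv_galOver (g @: L)%AS M).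
Qed.

Lemma primEltP L : <<1; primElt L>>%VS = L.
Proof.
rewrite /primElt; apply: (epsilon_spec (inhabits 0) (fun a : Om => <<1; a>>%VS = L)).
exists (separable_generator 1 L); apply/esym/eq_adjoin_separable_generator.
  exact: separableSr (subvf L) sepOm.
exact: sub1v.
Qed.

Lemma galOver_prim L (x : gT) : (x \in galOver L) = (x (primElt L) == primElt L).
Proof.
have La : primElt L \in L by rewrite -{2}(primEltP L) memv_adjoin.
apply/idP/eqP=> [xL | xa]; first exact: fixed_gal (subvf L) xL La.
have : x \in galOver (fixedField [set x]).
  by apply: (subsetP (galois_connection_subset _)); rewrite inE.
apply/subsetP/galS; rewrite -(primEltP L); apply/FadjoinP; split; first exact: sub1v.
by apply/fixedFieldP=> [|_ /set1P ->]; first exact: memvf.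
Qed.

Lemma gal_eq_prim L (g h : gT) :
  (h (primElt L) == g (primElt L)) = ((h * g^-1)%g \in galOver L).
Proof.
rewrite galOver_prim galMf; apply/eqP/eqP=> [-> | e].
  by rewrite -galMf mulgV gal_id.
by rewrite -[in LHS](mulgKV g h) !galMf e.
Qed.

Lemma gal_into_prim M L (g : gT) : (g \in gal_into M L) = (g (primElt L) \in M).
Proof.
rewrite inE -{1}(primEltP L) (aimg_adjoin (gal_repr g)) aimg1.
by apply/FadjoinP/idP=> [[]//|->]; split; first exact: sub1v.
Qed.

Lemma nrootsInE (M : {vspace Om}) (p : {poly Om}) (rs : seq Om) :
  uniq rs -> (forall x, (x \in rs) = (x \in M) && root p x) -> nrootsIn M p = size rs.
Proof.
move=> Urs rsE; rewrite /nrootsIn; set P := fun n => _.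
have [rs' [Urs' <- rs'E]] : P (epsilon (inhabits 0%N) P).
  by apply: epsilon_spec; exists (size rs), rs.
by apply/eqP; rewrite eq_sym -(uniq_size_uniq Urs') // => x; rewrite rsE rs'E.
Qed.

Lemma rhoK_card M L : (rhoK M L * #|galOver L|)%N = #|gal_into M L|.
Proof.
set a := primElt L; set H := galOver L; set S := gal_into M L.
have HS : (H * S)%g = S by rewrite /S gal_into_transporter mulg_transporter ?sub_galK.
rewrite (card_lmul_stable HS); congr (_ * _)%N.
have reprS C : C \in rcosets H S -> repr C \in S /\ C = (H :* repr C)%g.
  case/rcosetsP=> g Sg ->; rewrite rcoset_repr; split=> //.
  by case: repr_rcosetP => h Hh; rewrite -HS mem_mulg.
(* The roots of [minPoly 1 a] in [M] are the [g a] with [g \in S], and [g a]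
   only depends on the coset [H :* g]. *)
rewrite cardE -(size_map (fun C : {set gT} => (repr C : gT) a)) /rhoK; apply: nrootsInE.
  rewrite map_inj_in_uniq ?enum_uniq // => C D; rewrite !mem_enum => HSC HSD eCD.
  have [[_ ->] [_ ->]] := (reprS C HSC, reprS D HSD).
  by apply/rcoset_eqP; rewrite mem_rcoset -gal_eq_prim eCD.
move=> x; apply/mapP/andP=> [[C] | [Mx]].
  rewrite mem_enum => /reprS[SC _] ->; rewrite -gal_into_prim SC.
  by rewrite root_minPoly_gal ?sub1v ?mem_galK ?memvf.
case/(normalField_root_minPoly (sub1v _) (normalFieldf _) (memvf a)) => g _ gax.
rewrite -{}gax in Mx *; exists (H :* g)%g.
  by rewrite mem_enum mem_rcosets HS gal_into_prim.
by case: repr_rcosetP => h; rewrite galOver_prim galMf => /eqP ->.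
Qed.

Lemma conjInP M L (L' : {vspace Om}) :
  conjIn M L L' <-> exists2 g, g \in gal_into M L & L' = (g @: L)%VS.
Proof.
split=> [[_ [sL'M [f [homf defL']]]] | [g]]; last first.
  rewrite inE => sgLM ->; split; first exact: (valP (g @: L)%AS).
  by split=> //; exists (gal_repr g); rewrite k1AHom.
have sKL : (1 <= L <= {:Om})%VS by rewrite sub1v subvf.
have [g _ fg] := kHom_to_gal sKL (normalFieldf _) homf.
have fLgL : (f @: L = g @: L)%VS by apply: eq_in_limg.
by rewrite fLgL in defL'; subst L'; exists g; rewrite ?inE.
Qed.

Lemma mem_fixedField_conjs_gen M L (x : Om) :
  x \in fixedField (conjs_gen (galOver L) (gal_into M L)) <->
  (forall L' : {vspace Om}, conjIn M L L' -> x \in L').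
Proof.
rewrite /conjs_gen -gal_generated fixedField_galOver.
split=> [/mem_fixedFieldP[_ fixx] L' /conjInP[g Sg ->] | fixx].
  rewrite -(fixedField_galOver (g @: L)%AS); apply/fixedFieldP; first exact: memvf.
  by move=> y; rewrite -gal_conjg => Lgy; apply: fixx; apply/bigcupP; exists g.
apply/fixedFieldP=> [|y /bigcupP[g Sg]]; first exact: memvf.
rewrite gal_conjg => ygL; apply: fixed_gal (subvf _) ygL _.
by apply: fixx; apply/conjInP; exists g.
Qed.

Lemma tauK_index M L : tauK M L =
  if gal_into M L == set0 then 0%N else #|galK : conjs_gen (galOver L) (gal_into M L)|%g.
Proof.
set S := gal_into M L; set Q := conjs_gen _ S; rewrite /tauK; set P := fun n => _.
have noConj : S = set0 -> forall L' : {vspace Om}, ~ conjIn M L L'.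
  by move=> S0 L' /conjInP[g]; rewrite -/S S0 inE.
have someConj g : g \in S -> exists L' : {vspace Om}, conjIn M L L'.
  by move=> Sg; exists (g @: L)%VS; apply/conjInP; exists g.
have [n Pn] : exists n, P n.
  have [/noConj noC | /set0Pn[g /someConj someC]] := eqVneq S set0.
    by exists 0%N; rewrite /P; left; split.
  exists (\dim (fixedField Q)); rewrite /P; right; split=> //.
  by exists (fixedField Q); split=> // x; rewrite mem_fixedField_conjs_gen.
case: (epsilon_spec (inhabits 0%N) P (ex_intro _ n Pn)) => [[noC ->] | [[L' cL'] [D [DE ->]]]].
  by case: eqP => // /eqP /set0Pn[g /someConj[L' /noC]].
have /negPf -> : S != set0 by case/conjInP: cL' => g Sg _; apply/set0Pn; exists g.
have -> : D = fixedField Q.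
  by apply/vspaceP=> x; apply/idP/idP; rewrite DE mem_fixedField_conjs_gen.
by rewrite dim_galOver gal_fixedField.
Qed.

Section Compositum.
Variables L M J : {subfield Om}.
Hypotheses (sLM : (L <= M)%VS) (disjMJ : (galClosure M :&: galClosure J)%VS = 1%VS).
Local Notation A := (galOver (galClosure M)).
Local Notation B := (galOver (galClosure J)).
Local Notation S := (gal_into M L).
Local Notation N := ('N_galK(galOver J))%g.

Let nsAK := galOver_galClosure_normal M.
Let nsBK := galOver_galClosure_normal J.

Lemma galOver_galClosure_mulg : (A * B)%g = galK.
Proof.
rewrite -norm_joinEr ?(subset_trans (sub_galK _) (normal_norm nsAK)) //.
apply/eqP; rewrite eqEsubset sub_galK /= -(gal_fixedField (A <*> B)%G) galS //.
have: (fixedField (A <*> B)%G <= galClosure M :&: galClosure J)%VS.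
  rewrite subv_cap; apply/andP; split.
    by rewrite -[X in (_ <= X)%VS](fixedField_galOver (galClosure M)) fixedFieldS ?joing_subl.
  by rewrite -[X in (_ <= X)%VS](fixedField_galOver (galClosure J)) fixedFieldS ?joing_subr.
by rewrite disjMJ.
Qed.

Let defK := galOver_galClosure_mulg.
Let sAM : (A \subset galOver M)%g. Proof. by rewrite -subv_galOver sub_galClosure. Qed.
Let sAL : (A \subset galOver L)%g.
Proof. by rewrite -subv_galOver (subv_trans sLM) ?sub_galClosure. Qed.
Let sBJ : (B \subset galOver J)%g. Proof. by rewrite -subv_galOver sub_galClosure. Qed.
Let mulLJ : (galOver L * galOver J)%g = galK.
Proof. exact: mulg_supG defK sAL sBJ (sub_galK _) (sub_galK _). Qed.

Lemma dim_compositum : \dim (L * J)%AS = (\dim L * \dim J)%N.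
Proof. by rewrite !dim_galOver galOverM indexgI_mulG. Qed.

Lemma ascIndex_compositum : ascIndex (L * J)%AS = (ascIndex L * ascIndex J)%N.
Proof.
rewrite !ascIndex_galK galOverM (nclosureI nsAK nsBK defK) ?sub_galK //.
rewrite indexgI_mulG // (mulg_supG defK) ?gen_subG ?sub_galK //.
  exact: subset_trans sAL (sub_nclosure _ _).
exact: subset_trans sBJ (sub_nclosure _ _).
Qed.

Let gal_into_compositum : gal_into (M * J)%AS (L * J)%AS = (S :&: N)%g.
Proof.
rewrite !gal_into_transporter !galOverM.
exact: (transporterI nsAK nsBK defK) sAM (sub_galK _) sAL sBJ (sub_galK _).
Qed.

Let mulLS : (galOver L * S)%g = S.
Proof. by rewrite gal_into_transporter mulg_transporter ?sub_galK. Qed.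

Let mulAS : (A * S)%g = S.
Proof. by apply/eqP; rewrite eqEsubset mulg_subr ?group1 // andbT -{2}mulLS mulSg. Qed.

Let card_SN : (#|S :&: N| * #|galK|)%N = (#|S| * #|N|)%N.
Proof.
have sBN : (B \subset N)%g by rewrite subsetI sub_galK (subset_trans sBJ) ?normG.
have defAN : (A * N)%g = galK by rewrite (mulg_supG defK (subxx _) sBN) ?sub_galK.
have sSAN : (S \subset A * N)%g by rewrite defAN sub_galK.
by have := card_setI_mulG mulAS sSAN; rewrite defAN.
Qed.

Lemma rhoK_compositum : rhoK (M * J)%AS (L * J)%AS = (clusterSize J * rhoK M L)%N.
Proof.
have cardN : #|N| = (#|galOver J| * clusterSize J)%N.
  by rewrite clusterSize_galK Lagrange // subsetI sub_galK normG.
have cardLJ : (#|galOver L| * #|galOver J| = #|galK| * #|galOver (L * J)%AS|)%N.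
  by rewrite mul_cardG mulLJ galOverM.
apply/eqP; rewrite -(eqn_pmul2r (cardG_gt0 (galOver (L * J)%AS))).
rewrite -(eqn_pmul2r (cardG_gt0 galK)).
rewrite rhoK_card gal_into_compositum card_SN -rhoK_card cardN; apply/eqP.
transitivity (rhoK M L * clusterSize J * (#|galOver L| * #|galOver J|))%N; first ring.
by rewrite cardLJ; ring.
Qed.

Lemma tauK_compositum : tauK (M * J)%AS (L * J)%AS = (\dim J * tauK M L)%N.
Proof.
rewrite !tauK_index gal_into_compositum galOverM.
rewrite (conjs_genI nsAK nsBK defK) ?sub_galK //.
have [-> | /set0Pn[g Sg]] := eqVneq S set0; first by rewrite set0I eqxx muln0.
have /negPf -> : (S :&: N != set0)%g.
  apply/set0Pn/card_gt0P; rewrite -(ltn_pmul2r (cardG_gt0 galK)) card_SN.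
  by rewrite muln_gt0 cardG_gt0 andbT; apply/card_gt0P; exists g.
rewrite mulnC dim_galOver indexgI_mulG // (mulg_supG defK) ?sub_galK //.
exact: normal_sub_conjs_gen nsAK sAL Sg (sub_galK _).
Qed.

End Compositum.

End GaloisCorrespondence.

Unset Implicit Arguments.

Theorem mainTheorem17 (F : fieldType) (Om : splittingFieldType F)
    (L M J : {subfield Om}) :
  perfect_field F ->
  (L <= M)%VS ->
  (galClosure M :&: galClosure J)%VS = 1%VS ->
  [/\ \dim (L * J)%AS = (\dim L * \dim J)%N,
      ascIndex (L * J)%AS = (ascIndex L * ascIndex J)%N,
      rhoK (M * J)%AS (L * J)%AS = (clusterSize J * rhoK M L)%N
    & tauK (M * J)%AS (L * J)%AS = (\dim J * tauK M L)%N].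
Proof.
move=> perfF sLM disjMJ; have sepOm := perfect_field_separable Om perfF.
split.
- exact: (dim_compositum sepOm sLM disjMJ).
- exact: (ascIndex_compositum sepOm sLM disjMJ).
- exact: (rhoK_compositum sepOm sLM disjMJ).
- exact: (tauK_compositum sepOm sLM disjMJ).
Qed.
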